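(* Let $L,d\geq 1$ and let $G$ be an $(L,d)$-almost-biregular graph. Then $G$ has a non-empty subgraph $G'$ with average degree at least $d/2$ and maximum degree at most $4Ld$.
   Context: A bipartite graph $G$ is $(L,d)$-almost-biregular if it has parts $A$ and $B$ (with $A$ non-empty) such that $d_G(v)=d$ for every $v\in B$, and, writing $D=e(G)/|A|$, we have $D\geq d$ (equivalently $|A|\leq|B|$) and $d_G(u)\leq LD$ for every $u\in A$. Average degree is $2e/|V|$. *)

From mathcomp Require Import all_boot all_order all_algebra.
Set Implicit Arguments. Unset Strict Implicit. Unset Printing Implicit Defensive.
Import Order.TTheory GRing.Theory Num.Theory.
Local Open Scope ring_scope.

Section Graphs.
Variable V : finType.

Definition simple_graph (e : rel V) : Prop := symmetric e /\ irreflexive e.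

Definition deg (e : rel V) (v : V) : nat := #|[set u | e v u]|.

Definition edges (e : rel V) : {set {set V}} :=
  [set E : {set V} | [exists u, exists v, e u v && (E == [set u; v])]].

Definition bipartition (e : rel V) (A B : {set V}) : Prop :=
  [disjoint A & B] /\ A :|: B = setT /\
  (forall u v, e u v -> ((u \in A) && (v \in B)) || ((u \in B) && (v \in A))).

Definition Dval (R : realFieldType) (e : rel V) (A : {set V}) : R :=
  (#|edges e|)%:R / (#|A|)%:R.

Definition almost_biregular (R : realFieldType) (L : R) (d : nat)
    (e : rel V) (A B : {set V}) : Prop :=
  bipartition e A B /\ A != set0 /\
  (forall v, v \in B -> deg e v = d) /\
  (d%:R <= Dval R e A) /\
  (forall u, u \in A -> (deg e u)%:R <= L * Dval R e A).

Definition subgraph (e : rel V) (S : {set V}) (e' : rel V) : Prop :=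
  symmetric e' /\ (forall u v, e' u v -> [&& e u v, u \in S & v \in S]).

Definition avg_deg (R : realFieldType) (S : {set V}) (e' : rel V) : R :=
  2 * (#|edges e'|)%:R / (#|S|)%:R.

End Graphs.

From mathcomp Require Import all_boot all_order all_algebra.
From mathcomp Require Import zify lra.
Import Order.TTheory GRing.Theory Num.Theory.

Set Implicit Arguments.
Unset Strict Implicit.
Unset Printing Implicit Defensive.

(* Each u in A keeps at most c ~ 4Ld of its edges into a set X of B-vertices,
   and the subgraph is A together with X.  Degrees are then at most c on A and
   at most d on X, and it remains to choose X with d (|A| + |X|) <= 4 e(G').
   Take X maximising 4 e(G'_X) + 3d (|B| - |X|).  Comparing with X = set0 gives
   3d|X| <= 4 e(G'_X), which settles the case 2|X| >= |A|.  Otherwise adding any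
   v in B \ X does not increase the potential, so at least d/4 of the neighbours
   of v are saturated (they already keep c edges).  A saturated vertex has degree
   at most L D = L d |B| / |A| <= |B| c / (3|A|), so double counting the edges
   between saturated vertices and B \ X bounds |B| - |X| by e(G'_X), which
   gives the required density since |X| < |A| / 2 and |A| <= |B|. *)

Lemma card_dep_pairs (T : finType) (X : {set T}) (F : T -> {set T}) :
  #|[set p : T * T | (p.1 \in X) && (p.2 \in F p.1)]| = \sum_(u in X) #|F u|.
Proof.
rewrite -sum1dep_card -(pair_big_dep (mem X) (fun u v => v \in F u) (fun _ _ => 1)).
by apply: eq_bigr => u _; rewrite sum1_card.
Qed.

Lemma dense_of_saturated_bounds (a b m d S E : nat) : a <= b -> 2 * m < a ->
  3 * a * S <= b * E -> d * (b - m) <= 4 * S -> d * (a + m) <= 4 * E.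
Proof.
move=> ab ma SE dS; have b_pos : 0 < b by lia.
have key : b * (a + m) <= 3 * a * (b - m) by nia.
rewrite -(leq_pmul2l b_pos); apply: (@leq_trans (3 * a * (d * (b - m)))).
  by rewrite mulnCA [3 * a * _]mulnCA leq_mul2l key orbT.
apply: leq_trans (leq_mul (leqnn (3 * a)) dS) _.
by rewrite mulnCA [b * _]mulnCA leq_pmul2l.
Qed.

Section BipartiteEdges.
Variables (V : finType) (f : rel V) (A : {set V}).
Hypotheses (f_sym : symmetric f) (f_cross : forall u v, f u v -> (u \in A) != (v \in A)).

Lemma card_edges_bipartite : #|edges f| = \sum_(u in A) deg f u.
Proof.
set P := [set p : V * V | (p.1 \in A) && (p.2 \in [set w | f p.1 w])].
have endpoint p x : p \in P -> x \in [set p.1; p.2] -> x = if x \in A then p.1 else p.2.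
  rewrite !inE => /andP [p1A /f_cross]; rewrite p1A eq_sym eqb_id => /negbTE p2A.
  by case/orP => /eqP ->; rewrite ?p1A ?p2A.
have -> : edges f = [set [set p.1; p.2] | p in P].
  apply/setP => E; rewrite inE; apply/existsP/imsetP.
  - case=> u /existsP [v /andP [fuv /eqP ->]].
    have := f_cross fuv; case uA: (u \in A) => /= vA.
    + by exists (u, v); rewrite // !inE /= uA fuv.
    + exists (v, u); last by rewrite setUC.
      by rewrite !inE /= f_sym fuv andbT; case: (v \in A) vA.
  - case=> p; rewrite !inE => /andP [_ fp] ->.
    by exists p.1; apply/existsP; exists p.2; rewrite fp eqxx.
rewrite card_in_imset; first exact: card_dep_pairs.
move=> p q pP qP Epq.
have p1A : p.1 \in A by move: pP; rewrite inE => /andP [].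
have p2A : p.2 \notin A by move: pP; rewrite !inE p1A => /f_cross; rewrite p1A eq_sym eqb_id.
have := endpoint q p.1 qP; have := endpoint q p.2 qP.
rewrite -Epq !inE !eqxx orbT p1A (negbTE p2A) => /(_ isT) p2q /(_ isT) p1q.
by apply/pair_eqP; rewrite /= p1q p2q !eqxx.
Qed.

End BipartiteEdges.

Section CappedSubgraph.
Variables (V : finType) (e : rel V) (A B : {set V}) (d : nat).
Hypotheses (e_sym : symmetric e) (AB_disj : [disjoint A & B])
  (e_cross : forall u v, e u v -> ((u \in A) && (v \in B)) || ((u \in B) && (v \in A)))
  (deg_B : forall v, v \in B -> deg e v = d).
Implicit Types (X Y : {set V}) (c : nat).

Lemma notin_A_of_B v : v \in B -> v \notin A.
Proof. by move=> vB; rewrite (disjointFl AB_disj vB). Qed.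

Lemma adj_A_of_B u v : v \in B -> e u v -> u \in A.
Proof.
move=> vB /e_cross /orP [/andP [] // | /andP [_ vA]].
by rewrite (negbTE (notin_A_of_B vB)) in vA.
Qed.

Lemma card_edges_almost_biregular : #|edges e| = #|B| * d.
Proof.
rewrite (card_edges_bipartite (A := B) e_sym) => [|u v /e_cross]; last first.
  case/orP => [/andP [uA ->] | /andP [-> vA]]; first by rewrite (disjointFr AB_disj uA).
  by rewrite (disjointFr AB_disj vA).
by rewrite (eq_bigr (fun=> d)) ?sum_nat_const // => v /deg_B.
Qed.

Lemma sum_adj_B v : v \in B -> \sum_(u in A) e u v = d.
Proof.
move=> vB; rewrite -(deg_B vB) -big_mkcondr /= sum1_card /deg.
by apply: eq_card => u; rewrite !inE e_sym; apply/andb_idl/adj_A_of_B.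
Qed.

Definition nbr_in X u := [set v in X | e u v].
Definition deg_in X u := #|nbr_in X u|.

Lemma deg_in_setU1 X v u : v \notin X -> deg_in (v |: X) u = deg_in X u + e u v.
Proof.
move=> vX; rewrite /deg_in; have [euv | neuv] := boolP (e u v).
- have -> : nbr_in (v |: X) u = v |: nbr_in X u.
    by apply/setP => w; rewrite !inE; case: eqP => // ->; rewrite euv.
  by rewrite cardsU1 inE (negbTE vX) addnC.
- have -> : nbr_in (v |: X) u = nbr_in X u.
    by apply/setP => w; rewrite !inE; case: eqP => // ->; rewrite (negbTE neuv) !andbF.
  by rewrite addn0.
Qed.

Definition capped_sum c X := \sum_(u in A) minn (deg_in X u) c.

Lemma capped_sum_set0 c : capped_sum c set0 = 0.
Proof.
rewrite /capped_sum big1 // => u _.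
have -> : deg_in set0 u = 0 by apply: eq_card0 => w; rewrite !inE.
exact: min0n.
Qed.

Lemma capped_sum_setU1 c X v : v \notin X ->
  capped_sum c (v |: X) = capped_sum c X + \sum_(u in A) (e u v && (deg_in X u < c)).
Proof.
move=> vX; rewrite /capped_sum -big_split; apply: eq_bigr => u _; rewrite deg_in_setU1 //.
by case: (e u v); case: ltnP => /= ?; lia.
Qed.

Definition capped_nbr c X u := [set y in take c (enum (nbr_in X u))].

Definition capped c X : rel V := fun x y =>
  (x \in A) && (y \in capped_nbr c X x) || (y \in A) && (x \in capped_nbr c X y).

Lemma capped_nbr_sub c X u : capped_nbr c X u \subset nbr_in X u.
Proof. by apply/subsetP => y; rewrite inE => /mem_take; rewrite mem_enum. Qed.

Lemma card_capped_nbr c X u : #|capped_nbr c X u| = minn (deg_in X u) c.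
Proof.
rewrite cardsE (card_uniqP (take_uniq c (enum_uniq (mem (nbr_in X u))))).
by rewrite size_take_min -cardE minnC.
Qed.

Lemma capped_subgraph c X : subgraph e (A :|: X) (capped c X).
Proof.
split=> [x y | x y]; first by rewrite /capped orbC.
by case/orP => /andP [xA /(subsetP (capped_nbr_sub _ _ _))];
  rewrite !inE => /andP [yX exy]; rewrite ?xA ?yX ?orbT ?andbT // e_sym.
Qed.

Section SubsetOfB.
Variables (c : nat) (X : {set V}).
Hypothesis X_sub_B : X \subset B.

Lemma capped_nbr_notin_A u y : y \in capped_nbr c X u -> y \notin A.
Proof.
move/(subsetP (capped_nbr_sub _ _ _)); rewrite inE => /andP [/(subsetP X_sub_B)].
by move=> /notin_A_of_B.
Qed.

Lemma deg_capped_A u : u \in A -> deg (capped c X) u = minn (deg_in X u) c.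
Proof.
move=> uA; rewrite -card_capped_nbr; apply: eq_card => y; rewrite inE /capped uA /=.
by apply/orb_idr => /andP [_ /capped_nbr_notin_A]; rewrite uA.
Qed.

Lemma card_edges_capped : #|edges (capped c X)| = capped_sum c X.
Proof.
rewrite (card_edges_bipartite (A := A) (capped_subgraph c X).1) => [|x y].
  by apply: eq_bigr => u; apply: deg_capped_A.
by case/orP => /andP [-> /capped_nbr_notin_A /negbTE ->].
Qed.

End SubsetOfB.

Lemma deg_capped_le c X x : deg (capped c X) x <= deg e x.
Proof.
apply/subset_leq_card/subsetP => y; rewrite !inE.
by case/(capped_subgraph c X).2/and3P.
Qed.

Lemma sum_adj_le_deg u Y : \sum_(v in Y) e u v <= deg e u.
Proof.
rewrite -big_mkcondr /= sum1_card; apply/subset_leq_card/subsetP => v.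
by rewrite !inE => /andP [].
Qed.

Definition potential c X := 4 * capped_sum c X + 3 * d * (#|B| - #|X|).

Section MaxPotential.
Variables (c : nat) (X : {set V}).
Hypotheses (X_sub_B : X \subset B)
  (X_max : forall Y, Y \subset B -> potential c Y <= potential c X).

Lemma max_potential_capped_sum_ge : 3 * d * #|X| <= 4 * capped_sum c X.
Proof.
have := X_max (sub0set B); rewrite /potential capped_sum_set0 cards0 subn0.
have := subset_leq_card X_sub_B; nia.
Qed.

Lemma max_potential_saturated v : v \in B :\: X ->
  d <= 4 * \sum_(u in A) (e u v && (c <= deg_in X u)).
Proof.
case/setDP => vB vX; have vXB : v |: X \subset B by rewrite subUset sub1set vB.
have := X_max vXB; rewrite /potential capped_sum_setU1 // cardsU1 vX /=.
have := subset_leq_card vXB; rewrite cardsU1 vX /=.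
have : \sum_(u in A) (e u v && (deg_in X u < c)) +
         \sum_(u in A) (e u v && (c <= deg_in X u)) = d.
  rewrite -big_split -(sum_adj_B vB); apply: eq_bigr => u _.
  by case: (e u v); case: ltnP.
move: (\sum_(u in A) _) (\sum_(u in A) _) => unsaturated saturated; nia.
Qed.

Lemma max_potential_saturated_sum :
  d * (#|B| - #|X|) <= 4 * \sum_(u in A) (c <= deg_in X u) * deg e u.
Proof.
have -> : #|B| - #|X| = #|B :\: X| by rewrite cardsD (setIidPr X_sub_B).
rewrite mulnC -sum_nat_const.
apply: (@leq_trans (4 * \sum_(v in B :\: X) \sum_(u in A) (e u v && (c <= deg_in X u)))).
  by rewrite big_distrr /=; apply: leq_sum => v /max_potential_saturated.
rewrite leq_pmul2l // exchange_big /=; apply: leq_sum => u _.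
rewrite (eq_bigr (fun v => (c <= deg_in X u) * e u v)) => [|v _]; last first.
  by case: (e u v); case: (c <= _).
by rewrite -big_distrr /= leq_mul2l sum_adj_le_deg orbT.
Qed.

Hypotheses (A_le_B : #|A| <= #|B|)
  (cap_large : c < #|B| -> forall u, u \in A -> 3 * #|A| * deg e u <= #|B| * c).

Lemma max_potential_dense : d * (#|A| + #|X|) <= 4 * capped_sum c X.
Proof.
have [X_small | X_large] := ltnP (2 * #|X|) #|A|; last first.
  by have := max_potential_capped_sum_ge; nia.
apply: (dense_of_saturated_bounds A_le_B X_small _ max_potential_saturated_sum).
rewrite !big_distrr /=; apply: leq_sum => u uA.
case: (leqP c (deg_in X u)) => [sat | _]; last by rewrite mul0n muln0.
have : deg_in X u <= #|X| by apply/subset_leq_card/subsetP => v; rewrite inE => /andP [].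
by move=> ?; rewrite mul1n cap_large //; lia.
Qed.

End MaxPotential.

Lemma exists_dense_capped c : #|A| <= #|B| ->
    (c < #|B| -> forall u, u \in A -> 3 * #|A| * deg e u <= #|B| * c) ->
  exists2 X : {set V}, X \subset B & d * (#|A| + #|X|) <= 4 * capped_sum c X.
Proof.
move=> A_le_B cap_large.
have [X X_sub_B X_max] := @arg_maxnP _ set0 (fun Y => Y \subset B) (potential c) (sub0set B).
by exists X; last exact: max_potential_dense X_sub_B X_max A_le_B cap_large.
Qed.

Lemma exists_dense_capped_subgraph c : A != set0 -> #|A| <= #|B| ->
    (c < #|B| -> forall u, u \in A -> 3 * #|A| * deg e u <= #|B| * c) ->
  exists (S : {set V}) (f : rel V),
    [/\ subgraph e S f, S != set0, d * #|S| <= 4 * #|edges f|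
      & forall v, v \in S -> deg f v <= maxn c d].
Proof.
move=> A0 A_le_B cap_large; have [X X_sub_B dense] := exists_dense_capped A_le_B cap_large.
exists (A :|: X), (capped c X); split.
- exact: capped_subgraph.
- by rewrite setU_eq0 negb_and A0.
- rewrite card_edges_capped //; apply: leq_trans dense.
  by rewrite leq_mul2l cardsU leq_subr orbT.
- move=> v; rewrite inE => /orP [vA | vX].
  + by rewrite deg_capped_A // leq_max geq_minr.
  + by rewrite leq_max -(deg_B (subsetP X_sub_B v vX)) deg_capped_le orbT.
Qed.

End CappedSubgraph.

Local Open Scope ring_scope.

(* A realFieldType has no floor function, so the cap is found by a bounded search. *)
Lemma exists_bounded_floor (R : realFieldType) (x : R) (n : nat) : 0 <= x ->
  exists c : nat, c%:R <= x /\ ((c < n)%N -> x < c.+1%:R).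
Proof.
move=> x_ge0.
have [k xk k_max] := @arg_maxnP _ (ord0 : 'I_n.+1) (fun k : 'I_n.+1 => k%:R <= x) val x_ge0.
exists k; split=> // k_lt_n.
rewrite ltNge; apply/negP => /(k_max (Ordinal (k_lt_n : (k.+1 < n.+1)%N))).
by rewrite /= ltnn.
Qed.

Lemma half_le_avg_deg (R : realFieldType) (V : finType) (S : {set V}) (f : rel V) (d : nat) :
  S != set0 -> (d * #|S| <= 4 * #|edges f|)%N -> d%:R / 2 <= avg_deg R S f.
Proof.
move=> S0 dense; have S_pos : 0 < #|S|%:R :> R by rewrite ltr0n card_gt0.
rewrite /avg_deg ler_pdivlMr // mulrAC ler_pdivrMr // -(ler_nat R) !natrM in dense *.
lra.
Qed.

Lemma deg_cap_bound (R : realFieldType) (L : R) (a b d k c : nat) :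
  (0 < a)%N -> 1 <= L -> (1 <= d)%N ->
  k%:R <= L * ((b * d)%:R / a%:R) -> 4 * L * d%:R < c.+1%:R -> (3 * a * k <= b * c)%N.
Proof.
move=> a_pos L1 d1 k_le c_gt; rewrite -(ler_nat R) !natrM.
have a_posR : 0 < a%:R :> R by rewrite ltr0n.
rewrite mulrA ler_pdivlMr // natrM in k_le.
have d1R : 1 <= d%:R :> R by rewrite ler1n.
have b0 : 0 <= b%:R :> R by rewrite ler0n.
have c_ge : 3 * L * d%:R <= c%:R by move: c_gt; rewrite -addn1 natrD; nra.
nra.
Qed.

Theorem lemma3p7 (R : realFieldType) (V : finType) (L : R) (d : nat)
    (e : rel V) (A B : {set V}) :
  1 <= L -> (1 <= d)%N -> simple_graph e ->
  almost_biregular L d e A B ->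
  exists (S : {set V}) (e' : rel V),
    [/\ subgraph e S e', S != set0,
        (d%:R / 2 <= avg_deg R S e') &
        (forall v, v \in S -> (deg e' v)%:R <= 4 * L * d%:R)].
Proof.
move=> L1 d1 [e_sym _] [[AB_disj [_ e_cross]] [A0 [deg_B [d_le_D deg_A]]]].
have a_pos : (0 < #|A|)%N by rewrite card_gt0.
rewrite /Dval (card_edges_almost_biregular e_sym AB_disj e_cross deg_B) in d_le_D deg_A.
have A_le_B : (#|A| <= #|B|)%N.
  by move: d_le_D; rewrite ler_pdivlMr ?ltr0n // -natrM ler_nat mulnC leq_pmul2r.
have L0 : 0 <= 4 * L * d%:R :> R by rewrite !mulr_ge0 ?ler0n //; lra.
have [c [c_le c_gt]] := exists_bounded_floor #|B| L0.
have [S [f [sub S0 dense deg_S]]] :=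
  exists_dense_capped_subgraph e_sym AB_disj e_cross deg_B A0 A_le_B
    (fun c_lt_B u uA => deg_cap_bound a_pos L1 d1 (deg_A u uA) (c_gt c_lt_B)).
exists S, f; split=> // [|v vS]; first exact: half_le_avg_deg.
apply: le_trans (_ : (maxn c d)%:R <= _); first by rewrite ler_nat deg_S.
rewrite /maxn; case: ltnP => // _.
have : 1 <= d%:R :> R by rewrite ler1n.
nra.
Qed.
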